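(* Every strengthened signature is representable: for every family $(H_o,\theta_o)_{o\in O}$ of strengthened arities, the category $\mathrm{Mon}^\Sigma$ of representations of the associated signature $\Sigma=(O,o\mapsto\tilde H_o)$ has an initial object.
   Context: Conventions: for endofunctors $F,G$ of ${\mathsf{Set}}$, $F\cdot G$ denotes $F\circ G$; whiskering is written $F\alpha$, $\alpha F$; $I$ is the identity functor. An endofunctor is $\omega$-cocontinuous if it preserves colimits of $\omega$-chains; $\mathrm{End}^\omega({\mathsf{Set}})$ is the category of such endofunctors. $\mathrm{End}^\omega_*({\mathsf{Set}})$ is the category of pointed $\omega$-cocontinuous endofunctors $(F,e)$, $e\colon I\to F$; pointed endofunctors compose as $(Z_1\cdot Z_2,e_1\cdot e_2)$ with horizontal composite. A strengthened arity is a pair $(H,\theta)$ where $H$ is an $\omega$-cocontinuous endofunctor of $\mathrm{End}^\omega({\mathsf{Set}})$ and $\theta$ is a natural transformation with components $\theta_{X,(Z,e)}\colon H(X)\cdot Z\to H(X\cdot Z)$, natural in $X$ and $(Z,e)$, such that $\theta_{X,(I,1_I)}=1_{H(X)}$ and $\theta_{X,(Z_1\cdot Z_2,e_1\cdot e_2)}=\theta_{X\cdot Z_1,(Z_2,e_2)}\circ(\theta_{X,(Z_1,e_1)}Z_2)$. A strengthened signature is a family of strengthened arities indexed by a set $O$. Modules: for a monad $R=(R,\mu,\eta)$ on ${\mathsf{Set}}$, an $R$-module is a functor $M\colon{\mathsf{Set}}\to{\mathsf{Set}}$ with $\rho^M\colon M\cdot R\to M$ satisfying $\rho^M\circ\rho^MR=\rho^M\circ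 M\mu$, $\rho^M\circ M\eta=1_M$; module morphisms are natural transformations commuting with actions; $R$ is an $R$-module via $\mu$. For a monad morphism $f\colon R\to S$ and $S$-module $N$, $f^*N$ is $N$ with $R$-action $\rho^N\circ Nf$; $f$ is an $R$-module morphism $R\to f^*S$. Arity associated to $(H,\theta)$: for an $\omega$-cocontinuous monad $R$, $\tilde H(R)$ is the $R$-module $H(R)$ with action $H(\mu)\circ\theta_{R,(R,\eta)}$; for a monad morphism $f\colon R\to S$, $\tilde H(f)=H(f)\colon H(R)\to f^*H(S)$. Representations: for a signature $\Sigma=(O,\alpha)$ (a family of such arities), a representation of $\Sigma$ in an $\omega$-cocontinuous monad $R$ is a family $r=(r_o)_{o\in O}$ of $R$-module morphisms $r_o\colon\alpha_o(R)\to R$. $\mathrm{Mon}^\Sigma$ has objects pairs $(R,r)$ with $R$ an $\omega$-cocontinuous monad on ${\mathsf{Set}}$ and $r$ a representation of $\Sigma$ in $R$; a morphism $(M,r)\to(N,s)$ is a monad morphism $m\colon M\to N$ such that $m\circ r_o=(m^*s_o)\circ\alpha_o(m)$ as $M$-module morphisms $\alpha_o(M)\to m^*N$, for every $o\in O$. A signature is representable if $\mathrm{Mon}^\Sigma$ has an initial object. *)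

(* plain Rocq. The category Set is modelled by Type and functions;
   equality of functions / natural transformations is pointwise. *)
From Stdlib Require Import FunctionalExtensionality.

Unset Implicit Arguments.


Record Functor := MkFunctor {
  fobj :> Type -> Type;
  fmap : forall (A B : Type), (A -> B) -> fobj A -> fobj B;
  fmap_id : forall (A : Type) (x : fobj A), fmap A A (fun a : A => a) x = x;
  fmap_comp : forall (A B C : Type) (f : A -> B) (g : B -> C) (x : fobj A),
      fmap A C (fun a => g (f a)) x = fmap B C g (fmap A B f x) }.
Arguments fmap _ {A B} _ _.
Arguments fmap_id _ {A} _.
Arguments fmap_comp _ {A B C} _ _ _.

Definition Id_F : Functor :=
  @MkFunctor (fun A => A) (fun A B f x => f x) (fun A x => eq_refl)
             (fun A B C f g x => eq_refl).

Definition comp_F (F G : Functor) : Functor.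
Proof.
  refine (@MkFunctor (fun A => F (G A)) (fun A B f x => fmap F (fmap G f) x) _ _).
  - intros A x.
    rewrite (functional_extensionality (fmap G (fun a : A => a)) (fun y => y)
               (fmap_id G (A:=A))).
    apply fmap_id.
  - intros A B C f g x.
    rewrite (functional_extensionality (fmap G (fun a => g (f a)))
               (fun y => fmap G g (fmap G f y)) (fmap_comp G f g)).
    apply fmap_comp.
Defined.

Record NatTrans (F G : Functor) := MkNT {
  nt :> forall A : Type, F A -> G A;
  nt_nat : forall (A B : Type) (f : A -> B) (x : F A),
      nt B (fmap F f x) = fmap G f (nt A x) }.
Arguments MkNT {F G} _ _.
Arguments nt {F G} _ _ _.
Arguments nt_nat {F G} _ {A B} _ _.

Definition nt_id (F : Functor) : NatTrans F F :=
  @MkNT F F (fun A x => x) (fun A B f x => eq_refl).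

Definition nt_comp {F G H : Functor} (b : NatTrans G H) (a : NatTrans F G)
  : NatTrans F H.
Proof.
  refine (@MkNT F H (fun A x => b A (a A x)) _).
  intros A B f x. rewrite (nt_nat a). apply nt_nat.
Defined.

Definition whiskR {F G : Functor} (a : NatTrans F G) (Z : Functor)
  : NatTrans (comp_F F Z) (comp_F G Z).
Proof.
  refine (@MkNT (comp_F F Z) (comp_F G Z) (fun A x => a (Z A) x) _).
  intros A B f x. exact (nt_nat a (fmap Z f) x).
Defined.

Definition whiskL (F : Functor) {Z Z' : Functor} (b : NatTrans Z Z')
  : NatTrans (comp_F F Z) (comp_F F Z').
Proof.
  refine (@MkNT (comp_F F Z) (comp_F F Z') (fun A x => fmap F (b A) x) _).
  intros A B f x. simpl.
  rewrite <- !fmap_comp. f_equal.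
  apply functional_extensionality. intro y. apply nt_nat.
Defined.

Definition rho_nt (F : Functor) : NatTrans (comp_F F Id_F) F :=
  @MkNT (comp_F F Id_F) F (fun A x => x) (fun A B f x => eq_refl).

Definition assoc_nt (F Z1 Z2 : Functor)
  : NatTrans (comp_F F (comp_F Z1 Z2)) (comp_F (comp_F F Z1) Z2) :=
  @MkNT (comp_F F (comp_F Z1 Z2)) (comp_F (comp_F F Z1) Z2)
        (fun A x => x) (fun A B f x => eq_refl).

Definition hcomp_pt {Z1 Z2 : Functor} (e1 : NatTrans Id_F Z1)
  (e2 : NatTrans Id_F Z2) : NatTrans Id_F (comp_F Z1 Z2).
Proof.
  refine (@MkNT Id_F (comp_F Z1 Z2) (fun A x => e1 (Z2 A) (e2 A x)) _).
  intros A B f x.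
  etransitivity.
  - exact (f_equal (e1 (Z2 B)) (nt_nat e2 f x)).
  - exact (nt_nat e1 (fmap Z2 f) (e2 A x)).
Defined.

Definition is_colim_Set (X : nat -> Type) (f : forall n, X n -> X (S n))
  (C : Type) (c : forall n, X n -> C) : Prop :=
  (forall n x, c (S n) (f n x) = c n x) /\
  forall (D : Type) (d : forall n, X n -> D),
    (forall n x, d (S n) (f n x) = d n x) ->
    exists u : C -> D,
      (forall n x, u (c n x) = d n x) /\
      forall u' : C -> D, (forall n x, u' (c n x) = d n x) -> forall y, u' y = u y.

Definition omega_cocont (F : Functor) : Prop :=
  forall X f C c, @is_colim_Set X f C c ->
    @is_colim_Set (fun n => F (X n)) (fun n => fmap F (f n))
                  (F C) (fun n => fmap F (c n)).

Lemma Id_cocont : omega_cocont Id_F.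
Proof. intros X f C c h. exact h. Qed.

Lemma comp_cocont {F G : Functor} :
  omega_cocont F -> omega_cocont G -> omega_cocont (comp_F F G).
Proof. intros hF hG X f C c h. exact (hF _ _ _ _ (hG _ _ _ _ h)). Qed.

Record EndW := MkEndW { ef :> Functor; ef_cocont : omega_cocont ef }.

Definition I_W : EndW := @MkEndW Id_F Id_cocont.
Definition comp_W (X Z : EndW) : EndW :=
  @MkEndW (comp_F X Z) (comp_cocont (ef_cocont X) (ef_cocont Z)).

Definition is_colim_End (X : nat -> EndW) (f : forall n, NatTrans (X n) (X (S n)))
  (C : EndW) (c : forall n, NatTrans (X n) C) : Prop :=
  (forall n A x, c (S n) A (f n A x) = c n A x) /\
  forall (D : EndW) (d : forall n, NatTrans (X n) D),
    (forall n A x, d (S n) A (f n A x) = d n A x) ->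
    exists u : NatTrans C D,
      (forall n A x, u A (c n A x) = d n A x) /\
      forall u' : NatTrans C D, (forall n A x, u' A (c n A x) = d n A x) ->
        forall A y, u' A y = u A y.

Record EndWFunctor := MkEWF {
  Hobj :> EndW -> EndW;
  Hmap : forall X Y : EndW, NatTrans X Y -> NatTrans (Hobj X) (Hobj Y);
  Hmap_id : forall (X : EndW) A x, Hmap X X (nt_id X) A x = x;
  Hmap_comp : forall (X Y Z : EndW) (a : NatTrans X Y) (b : NatTrans Y Z) A x,
      Hmap X Z (nt_comp b a) A x = Hmap Y Z b A (Hmap X Y a A x) }.
Arguments Hmap _ {X Y} _.

Definition omega_cocont_H (H : EndWFunctor) : Prop :=
  forall X f C c, @is_colim_End X f C c ->
    @is_colim_End (fun n => H (X n)) (fun n => Hmap H (f n))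
                  (H C) (fun n => Hmap H (c n)).

Record PtEnd := MkPt { pt :> EndW; pt_e : NatTrans I_W pt }.

Definition I_pt : PtEnd := @MkPt I_W (nt_id I_W).
Definition comp_pt (Z1 Z2 : PtEnd) : PtEnd :=
  @MkPt (comp_W Z1 Z2) (hcomp_pt (pt_e Z1) (pt_e Z2)).

Definition is_pt_mor {Z Z' : PtEnd} (b : NatTrans Z Z') : Prop :=
  forall A x, b A (pt_e Z A x) = pt_e Z' A x.

Record StrArity := MkSA {
  sa_H :> EndWFunctor;
  sa_cocont : omega_cocont_H sa_H;
  theta : forall (X : EndW) (Z : PtEnd),
      NatTrans (comp_W (sa_H X) Z) (sa_H (comp_W X Z));
  theta_nat_X : forall (X X' : EndW) (a : NatTrans X X') (Z : PtEnd) A x,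
      theta X' Z A (Hmap sa_H a (Z A) x)
      = @Hmap sa_H (comp_W X Z) (comp_W X' Z) (whiskR a Z) A (theta X Z A x);
  theta_nat_Z : forall (X : EndW) (Z Z' : PtEnd) (b : NatTrans Z Z'),
      @is_pt_mor Z Z' b -> forall A x,
      theta X Z' A (fmap (sa_H X) (b A) x)
      = @Hmap sa_H (comp_W X Z) (comp_W X Z') (whiskL X b) A (theta X Z A x);
  (* theta_{X,(I,1)} = 1  (up to the identity X.I = X) *)
  theta_id : forall (X : EndW) A x,
      @Hmap sa_H (comp_W X I_W) X (rho_nt X) A (theta X I_pt A x) = x;
  (* theta_{X, Z1.Z2} = theta_{X.Z1, Z2} o theta_{X,Z1} Z2
     (up to the identity X.(Z1.Z2) = (X.Z1).Z2) *)
  theta_comp : forall (X : EndW) (Z1 Z2 : PtEnd) A x,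
      @Hmap sa_H (comp_W X (comp_W Z1 Z2)) (comp_W (comp_W X Z1) Z2)
            (assoc_nt X Z1 Z2) A (theta X (comp_pt Z1 Z2) A x)
      = theta (comp_W X Z1) Z2 A (theta X Z1 (Z2 A) x) }.

Record Monad := MkMonad {
  mT :> EndW;
  m_eta : NatTrans I_W mT;
  m_mu : NatTrans (comp_W mT mT) mT;
  mu_assoc : forall A (x : mT (mT (mT A))),
      m_mu A (m_mu (mT A) x) = m_mu A (fmap mT (m_mu A) x);
  mu_eta_l : forall A (x : mT A), m_mu A (m_eta (mT A) x) = x;
  mu_eta_r : forall A (x : mT A), m_mu A (fmap mT (m_eta A) x) = x }.

Record MonadMor (R S : Monad) := MkMM {
  mm :> NatTrans R S;
  mm_eta : forall A x, mm A (m_eta R A x) = m_eta S A x;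
  mm_mu : forall A (x : R (R A)),
      mm A (m_mu R A x) = m_mu S A (fmap S (mm A) (mm (R A) x)) }.

Definition pt_of_monad (R : Monad) : PtEnd := @MkPt R (m_eta R).

Definition tilde_act (Hs : StrArity) (R : Monad)
  : NatTrans (comp_W (Hs R) R) (Hs R) :=
  nt_comp (@Hmap Hs (comp_W R R) R (m_mu R)) (theta Hs R (pt_of_monad R)).

(* a representation: a family of R-module morphisms  tilde H_o (R) -> R *)
Record Rep {O : Type} (Sig : O -> StrArity) (R : Monad) := MkRep {
  rep : forall o, NatTrans (Sig o R) R;
  rep_mod : forall o A x,
      rep o A (tilde_act (Sig o) R A x) = m_mu R A (rep o (R A) x) }.
Arguments rep {O Sig R} _ _.
Arguments rep_mod {O Sig R} _ _ _ _.

Definition is_rep_mor {O : Type} {Sig : O -> StrArity} {M N : Monad}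
  (r : Rep Sig M) (s : Rep Sig N) (m : MonadMor M N) : Prop :=
  forall o A x, m A (rep r o A x) = rep s o A (Hmap (Sig o) m A x).

Definition representable {O : Type} (Sig : O -> StrArity) : Prop :=
  exists (R : Monad) (r : Rep Sig R),
    forall (S : Monad) (s : Rep Sig S),
      exists m : MonadMor R S,
        is_rep_mor r s m /\
        forall m' : MonadMor R S, is_rep_mor r s m' -> forall A x, m' A x = m A x.

(* The initial representation is the syntax of the signature: the initial
   algebra [T] of [F X = I + sum_o H_o X], built as the colimit of the chain
   [0 -> F 0 -> F (F 0) -> ...], which [F] preserves because every [H_o] is
   omega-cocontinuous. The monad multiplication of [T] is substitution,
   defined by recursion on the approximations [F^n 0]; the strength [theta]
   carries substitution under an operation, and its naturality, unit and
   composition laws give the monad laws and the module-morphism property of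
   the operations. The morphism into another representation [(M, s)] is again
   defined by recursion on the approximations, sending variables to the unit
   of [M] and operations to [s]; it is unique because every element of [T]
   comes from some approximation. *)

From Stdlib Require Import FunctionalExtensionality PropExtensionality ProofIrrelevance
  ClassicalEpsilon Relation_Operators.

Lemma nat_trans_ext {F G : Functor} (a b : NatTrans F G) :
  (forall A x, a A x = b A x) -> a = b.
Proof.
  destruct a as [a Ha], b as [b Hb]; simpl; intro E.
  assert (a = b) as <-.
  { apply functional_extensionality_dep; intro A.
    apply functional_extensionality; intro x; apply E. }
  f_equal; apply proof_irrelevance.
Qed.

Lemma Hmap_ext (H : EndWFunctor) {X Y : EndW} (a b : NatTrans X Y) :
  (forall A x, a A x = b A x) -> forall A x, Hmap H a A x = Hmap H b A x.
Proof. intros E A x. now rewrite (nat_trans_ext a b E). Qed.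

Lemma Hmap_comp_ext (H : EndWFunctor) {X Y Z : EndW}
    (a : NatTrans X Y) (b : NatTrans Y Z) (c : NatTrans X Z) :
  (forall A x, b A (a A x) = c A x) ->
  forall A x, Hmap H b A (Hmap H a A x) = Hmap H c A x.
Proof. intros E A x. rewrite <- Hmap_comp. now apply Hmap_ext. Qed.

Lemma Hmap_square (H : EndWFunctor) {X Y Y' Z : EndW}
    (a : NatTrans X Y) (b : NatTrans Y Z) (c : NatTrans X Y') (d : NatTrans Y' Z) :
  (forall A x, b A (a A x) = d A (c A x)) ->
  forall A x, Hmap H b A (Hmap H a A x) = Hmap H d A (Hmap H c A x).
Proof. intros E A x. rewrite <- !Hmap_comp. now apply Hmap_ext. Qed.

(** * Quotients and colimits of chains of types *)

Section Quotient.
Context {X : Type} (R : X -> X -> Prop).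

(* Classes of the equivalence closure of [R], represented as predicates. *)
Definition quot := {P : X -> Prop | exists a, P = clos_refl_sym_trans X R a}.

Definition class_of (a : X) : quot :=
  exist _ (clos_refl_sym_trans X R a) (ex_intro _ a eq_refl).

Lemma class_of_eq a b : clos_refl_sym_trans X R a b -> class_of a = class_of b.
Proof.
  intro hab. apply subset_eq_compat, functional_extensionality; intro z.
  apply propositional_extensionality; split; intro h.
  - exact (rst_trans _ _ _ _ _ (rst_sym _ _ _ _ hab) h).
  - exact (rst_trans _ _ _ _ _ hab h).
Qed.

Definition repr (q : quot) : X :=
  proj1_sig (constructive_indefinite_description _ (proj2_sig q)).

Lemma class_of_repr q : class_of (repr q) = q.
Proof.
  unfold repr; destruct constructive_indefinite_description as [a Ha]; simpl.
  destruct q as [P HP]; simpl in *; subst P.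
  now apply subset_eq_compat.
Qed.

Definition quot_lift {D : Type} (g : X -> D) (q : quot) : D := g (repr q).

Lemma quot_lift_class {D : Type} (g : X -> D) :
  (forall x y, R x y -> g x = g y) -> forall a, quot_lift g (class_of a) = g a.
Proof.
  intros Hg a; unfold quot_lift.
  assert (h : clos_refl_sym_trans X R a (repr (class_of a))).
  { pose proof (f_equal (@proj1_sig _ _) (class_of_repr (class_of a))) as E.
    simpl in E; apply rst_sym; rewrite E; apply rst_refl. }
  symmetry; clear -Hg h; induction h; auto; congruence.
Qed.

End Quotient.

Section ChainColimit.
Variables (X : nat -> Type) (f : forall n, X n -> X (S n)).

Definition chain_step (p q : {n : nat & X n}) : Prop :=
  exists n x, p = existT X (S n) (f n x) /\ q = existT X n x.

Definition chain_colim := quot chain_step.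

Definition chain_in n (x : X n) : chain_colim := class_of chain_step (existT X n x).

Lemma chain_in_compat n x : chain_in (S n) (f n x) = chain_in n x.
Proof. apply class_of_eq, rst_step; now exists n, x. Qed.

Lemma chain_in_surj y : exists n x, chain_in n x = y.
Proof.
  pose proof (class_of_repr chain_step y) as E.
  destruct (repr _ y) as [n x]; now exists n, x.
Qed.

Definition chain_lift {D : Type} (d : forall n, X n -> D) : chain_colim -> D :=
  quot_lift chain_step (fun p => d (projT1 p) (projT2 p)).

Lemma chain_lift_in {D : Type} (d : forall n, X n -> D) :
  (forall n x, d (S n) (f n x) = d n x) ->
  forall n x, chain_lift d (chain_in n x) = d n x.
Proof.
  intros Hd n x; unfold chain_lift, chain_in; rewrite quot_lift_class; [reflexivity|].
  intros p q (m & z & -> & ->); apply Hd.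
Qed.

End ChainColimit.
Arguments chain_in {X f} n x.

(* The colimit injections are jointly surjective: [u] below is the
   characteristic predicate of their joint image, which must be [True]. *)
Lemma colim_surj {X f C c} : @is_colim_Set X f C c -> forall y, exists n x, c n x = y.
Proof.
  intros [Hc Hu] y.
  destruct (Hu Prop (fun _ _ => True) (fun _ _ => eq_refl)) as [u [_ Hu2]].
  rewrite (Hu2 (fun y => exists n x, c n x = y)), <- (Hu2 (fun _ => True)); auto.
  intros n x; apply propositional_extensionality; split; eauto.
Qed.

Lemma colim_ext {X f C c} (H : @is_colim_Set X f C c) {D : Type} (g h : C -> D) :
  (forall n x, g (c n x) = h (c n x)) -> forall y, g y = h y.
Proof. intros E y; destruct (colim_surj H y) as (n & x & <-); apply E. Qed.

Definition colim_lift {X f C c} (H : @is_colim_Set X f C c) {D : Type}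
    (d : forall n, X n -> D) (Hd : forall n x, d (S n) (f n x) = d n x) : C -> D :=
  proj1_sig (constructive_indefinite_description _ (proj2 H D d Hd)).

Lemma colim_lift_in {X f C c} (H : @is_colim_Set X f C c) {D : Type} d Hd n x :
  @colim_lift X f C c H D d Hd (c n x) = d n x.
Proof.
  exact (proj1 (proj2_sig (constructive_indefinite_description _ (proj2 H D d Hd))) n x).
Qed.

(** * Coproducts and colimits of chains of functors *)

Definition zero_F : Functor :=
  @MkFunctor (fun _ => Empty_set)
    (fun A B h (x : Empty_set) => match x return Empty_set with end)
    (fun A (x : Empty_set) => match x with end)
    (fun A B C f g (x : Empty_set) => match x with end).

Definition zero_nt (G : Functor) : NatTrans zero_F G :=
  @MkNT zero_F G (fun A (x : Empty_set) => match x with end)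
    (fun A B h (x : Empty_set) => match x with end).

Definition sum_F (F G : Functor) : Functor.
Proof.
  refine (@MkFunctor (fun A => (F A + G A)%type)
    (fun A B h x => match x with
                    | inl a => inl (fmap F h a)
                    | inr b => inr (fmap G h b) end) _ _).
  - intros A [a|b]; f_equal; apply fmap_id.
  - intros A B C f g [a|b]; f_equal; apply fmap_comp.
Defined.

Definition sigma_F {O : Type} (Fs : O -> Functor) : Functor.
Proof.
  refine (@MkFunctor (fun A => {o : O & Fs o A})
    (fun A B h x => match x with existT _ o y => existT _ o (fmap (Fs o) h y) end) _ _).
  - intros A [o y]; f_equal; apply fmap_id.
  - intros A B C f g [o y]; f_equal; apply fmap_comp.
Defined.

Lemma zero_cocont : omega_cocont zero_F.
Proof.
  intros X f C c _; split; [intros n []|].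
  intros D d Hd; exists (fun e : Empty_set => match e with end).
  split; [intros n []|intros u' _ []].
Qed.

Lemma sum_cocont F G : omega_cocont F -> omega_cocont G -> omega_cocont (sum_F F G).
Proof.
  intros hF hG X f C c h.
  pose proof (hF X f C c h) as cF; pose proof (hG X f C c h) as cG.
  split.
  - intros n [a|b]; simpl; f_equal; [apply (proj1 cF)|apply (proj1 cG)].
  - intros D d Hd.
    pose (uF := colim_lift cF (fun n y => d n (inl y)) (fun n y => Hd n (inl y))).
    pose (uG := colim_lift cG (fun n y => d n (inr y)) (fun n y => Hd n (inr y))).
    exists (fun s => match s with inl a => uF a | inr b => uG b end); split.
    + intros n [a|b]; [exact (colim_lift_in cF _ _ n a)|exact (colim_lift_in cG _ _ n b)].
    + intros u' Hu [a|b].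
      * apply (colim_ext cF (fun a => u' (inl a)) uF); intros n x.
        transitivity (d n (inl x)); [apply (Hu n (inl x))|symmetry; exact (colim_lift_in cF _ _ n x)].
      * apply (colim_ext cG (fun b => u' (inr b)) uG); intros n x.
        transitivity (d n (inr x)); [apply (Hu n (inr x))|symmetry; exact (colim_lift_in cG _ _ n x)].
Qed.

Lemma sigma_cocont {O : Type} (Fs : O -> Functor) :
  (forall o, omega_cocont (Fs o)) -> omega_cocont (sigma_F Fs).
Proof.
  intros hF X f C c h.
  pose proof (fun o => hF o X f C c h) as cF.
  split.
  - intros n [o y]; simpl; f_equal; apply (proj1 (cF o)).
  - intros D d Hd.
    pose (u o := colim_lift (cF o) (fun n y => d n (existT _ o y))
                   (fun n y => Hd n (existT _ o y))).
    exists (fun s => match s with existT _ o y => u o y end); split.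
    + intros n [o y]; exact (colim_lift_in (cF o) _ _ n y).
    + intros u' Hu [o y].
      apply (colim_ext (cF o) (fun y => u' (existT _ o y)) (u o)); intros n x.
      transitivity (d n (existT _ o x)); [apply (Hu n (existT _ o x))|].
      symmetry; exact (colim_lift_in (cF o) _ _ n x).
Qed.

Section FunctorChainColimit.
Variables (X : nat -> Functor) (f : forall n, NatTrans (X n) (X (S n))).

Definition colim_obj (A : Type) := chain_colim (fun n => X n A) (fun n => f n A).

Definition colim_map A B (h : A -> B) : colim_obj A -> colim_obj B :=
  chain_lift _ _ (fun n x => chain_in (f := fun n => f n B) n (fmap (X n) h x)).

Lemma colim_map_in A B (h : A -> B) n x :
  colim_map A B h (chain_in n x) = chain_in n (fmap (X n) h x).
Proof.
  apply chain_lift_in; intros m y.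
  rewrite <- nt_nat; exact (chain_in_compat (fun n => X n B) (fun n => f n B) m _).
Qed.

Definition colim_F : Functor.
Proof.
  refine (@MkFunctor colim_obj colim_map _ _).
  - intros A y; destruct (chain_in_surj _ _ y) as (n & x & <-).
    now rewrite colim_map_in, fmap_id.
  - intros A B C g h y; destruct (chain_in_surj _ _ y) as (n & x & <-).
    now rewrite !colim_map_in, fmap_comp.
Defined.

Definition colim_F_in n : NatTrans (X n) colim_F.
Proof.
  refine (@MkNT (X n) colim_F (fun A x => chain_in n x) _).
  intros A B h x; symmetry; apply colim_map_in.
Defined.

(* Colimits commute with colimits: for a chain [Y] with colimit [Yc], the
   cocone [d k : colim_F (Y k) -> D] splits into cocones [X n (Y k) -> D]
   over [k], whose mediating maps [u n : X n Yc -> D] form a cocone over [n]. *)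
Lemma colim_F_cocont : (forall n, omega_cocont (X n)) -> omega_cocont colim_F.
Proof.
  intros hX Y g Yc cy hY.
  pose proof (fun n => hX n Y g Yc cy hY) as cX.
  split.
  - intros k z; cbv beta; rewrite <- (fmap_comp colim_F).
    f_equal; apply functional_extensionality; intro a; apply (proj1 hY).
  - intros D d Hd.
    assert (Hdk : forall n k (z : X n (Y k)),
               d (S k) (chain_in n (fmap (X n) (g k) z)) = d k (chain_in n z)).
    { intros n k z; rewrite <- (Hd k (chain_in n z)); simpl.
      now rewrite colim_map_in. }
    pose (u n := colim_lift (cX n) (fun k z => d k (chain_in n z)) (Hdk n)).
    assert (Hu : forall n (x : X n Yc), u (S n) (f n Yc x) = u n x).
    { intro n; apply (colim_ext (cX n) (fun x => u (S n) (f n Yc x)) (u n)).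
      intros k z; simpl; rewrite (nt_nat (f n) (cy k) z).
      etransitivity; [exact (colim_lift_in (cX (S n)) _ _ k _)|].
      etransitivity; [|symmetry; exact (colim_lift_in (cX n) _ _ k z)].
      f_equal; exact (chain_in_compat _ (fun n => f n (Y k)) n z). }
    exists (chain_lift _ _ u); split.
    + intros k w; destruct (chain_in_surj _ _ w) as (n & z & <-); simpl.
      rewrite colim_map_in, chain_lift_in by exact Hu.
      exact (colim_lift_in (cX n) _ _ k z).
    + intros u' Hu' y; destruct (chain_in_surj _ _ y) as (n & x & <-).
      rewrite chain_lift_in by exact Hu.
      destruct (colim_surj (cX n) x) as (k & z & <-).
      etransitivity; [|symmetry; exact (colim_lift_in (cX n) _ _ k z)].
      rewrite <- (Hu' k (chain_in n z)); simpl.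
      now rewrite colim_map_in.
Qed.

End FunctorChainColimit.

Section EndChainColimit.
Variables (X : nat -> EndW) (f : forall n, NatTrans (X n) (X (S n))).

Definition colim_W : EndW :=
  MkEndW (colim_F (fun n => ef (X n)) f) (colim_F_cocont _ _ (fun n => ef_cocont (X n))).

Definition colim_W_in n : NatTrans (X n) colim_W := colim_F_in (fun n => ef (X n)) f n.

Lemma colim_W_is_colim : is_colim_End X f colim_W colim_W_in.
Proof.
  split; [intros n A x; exact (chain_in_compat _ (fun n => f n A) n x)|].
  intros D d Hd.
  pose (u A := chain_lift _ _ (fun n x => d n A x) : colim_W A -> D A).
  assert (Hu : forall A n x, u A (chain_in n x) = d n A x)
    by (intros; apply chain_lift_in; intros; apply Hd).
  unshelve eexists (MkNT u _).
  - intros A B h y; destruct (chain_in_surj _ _ y) as (n & x & <-).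
    change (u B (colim_map _ f A B h (chain_in n x)) = fmap D h (u A (chain_in n x))).
    rewrite colim_map_in, !Hu; apply nt_nat.
  - split; [intros; apply Hu|].
    intros u' Hu' A y; destruct (chain_in_surj _ _ y) as (n & x & <-); simpl.
    rewrite Hu; apply Hu'.
Qed.

End EndChainColimit.

(* Comparing with [colim_W], which is computed pointwise. *)
Lemma colim_End_surj X f C c :
  is_colim_End X f C c -> forall A y, exists n x, c n A x = y.
Proof.
  intros H A y.
  destruct (proj2 H _ _ (proj1 (colim_W_is_colim X f))) as [u [Hu _]].
  destruct (proj2 (colim_W_is_colim X f) C c (proj1 H)) as [v [Hv _]].
  destruct (proj2 H C c (proj1 H)) as [w [_ Hw]].
  assert (vu : v A (u A y) = y).
  { change (nt_comp v u A y = nt_id C A y).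
    rewrite (Hw (nt_comp v u)), (Hw (nt_id C)); trivial; intros; simpl.
    now rewrite Hu, Hv. }
  destruct (chain_in_surj _ _ (u A y)) as (n & x & E).
  exists n, x; rewrite <- vu, <- E; symmetry; exact (Hv n A x).
Qed.

Definition colim_End_lift {X f C c} (H : @is_colim_End X f C c) {D : EndW}
    (d : forall n, NatTrans (X n) D) (Hd : forall n A x, d (S n) A (f n A x) = d n A x) :
  NatTrans C D :=
  proj1_sig (constructive_indefinite_description _ (proj2 H D d Hd)).

Lemma colim_End_lift_in {X f C c} (H : @is_colim_End X f C c) {D : EndW} d Hd n A x :
  @colim_End_lift X f C c H D d Hd A (c n A x) = d n A x.
Proof.
  exact (proj1 (proj2_sig (constructive_indefinite_description _ (proj2 H D d Hd))) n A x).
Qed.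

(** * The initial representation *)

Section InitialRepresentation.
Variables (O : Type) (Sig : O -> StrArity).

Definition syntax_step (X : EndW) : EndW :=
  MkEndW (sum_F Id_F (sigma_F (fun o => ef (Sig o X))))
    (sum_cocont _ _ Id_cocont (sigma_cocont _ (fun o => ef_cocont (Sig o X)))).

Definition syntax_step_map {X Y : EndW} (a : NatTrans X Y) :
  NatTrans (syntax_step X) (syntax_step Y).
Proof.
  refine (@MkNT (syntax_step X) (syntax_step Y)
    (fun A (s : (A + {o : O & Sig o X A})%type) =>
       match s return (A + {o : O & Sig o Y A})%type with
       | inl x => inl x
       | inr (existT _ o y) => inr (existT _ o (Hmap (Sig o) a A y)) end) _).
  intros A B h [x|[o y]]; simpl; [reflexivity|].
  do 2 f_equal; apply nt_nat.
Defined.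

Fixpoint approx (n : nat) : EndW :=
  match n with 0 => MkEndW zero_F zero_cocont | S n => syntax_step (approx n) end.

Fixpoint approx_incl (n : nat) : NatTrans (approx n) (approx (S n)) :=
  match n return NatTrans (approx n) (approx (S n)) with
  | 0 => zero_nt _
  | S n => syntax_step_map (approx_incl n) end.

Definition T : EndW := colim_W approx approx_incl.

Definition T_in n : NatTrans (approx n) T := colim_W_in approx approx_incl n.

Lemma T_is_colim : is_colim_End approx approx_incl T T_in.
Proof. apply colim_W_is_colim. Qed.

Lemma T_in_compat n A x : T_in (S n) A (approx_incl n A x) = T_in n A x.
Proof. exact (proj1 T_is_colim n A x). Qed.

Lemma T_in_surj A (t : T A) : exists n x, T_in n A x = t.
Proof. exact (chain_in_surj _ _ t). Qed.

Lemma fmap_T_in A B (h : A -> B) n x :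
  fmap T h (T_in n A x) = T_in n B (fmap (approx n) h x).
Proof. symmetry; apply nt_nat. Qed.

Lemma T_in_var A n (a : A) : T_in (S n) A (inl a) = T_in 1 A (inl a).
Proof.
  induction n as [|n IHn]; [reflexivity|].
  rewrite <- IHn; exact (T_in_compat (S n) A (inl a)).
Qed.

Definition T_eta : NatTrans I_W T.
Proof.
  refine (@MkNT I_W T (fun A a => T_in 1 A (inl a)) _).
  intros A B h a; symmetry; exact (fmap_T_in A B h 1 (inl a)).
Defined.

Definition T_pt : PtEnd := MkPt T T_eta.

Definition T_op_in o n : NatTrans (Sig o (approx n)) T.
Proof.
  refine (@MkNT (Sig o (approx n)) T (fun A y => T_in (S n) A (inr (existT _ o y))) _).
  intros A B h y; symmetry; exact (fmap_T_in A B h (S n) (inr (existT _ o y))).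
Defined.

Lemma T_op_in_compat o n A x :
  T_op_in o (S n) A (Hmap (Sig o) (approx_incl n) A x) = T_op_in o n A x.
Proof. exact (T_in_compat (S n) A (inr (existT _ o x))). Qed.

(* The operation [o] of [T] is induced on [H_o T = colim_n H_o (approx n)]
   by the cocontinuity of [H_o]. *)
Definition T_op o : NatTrans (Sig o T) T :=
  colim_End_lift (sa_cocont (Sig o) _ _ _ _ T_is_colim) (T_op_in o) (T_op_in_compat o).

Lemma T_op_in_beta o n A y :
  T_op o A (Hmap (Sig o) (T_in n) A y) = T_in (S n) A (inr (existT _ o y)).
Proof. apply (colim_End_lift_in (sa_cocont (Sig o) _ _ _ _ T_is_colim)). Qed.

Lemma Hmap_T_in_surj o A (w : Sig o T A) : exists n y, Hmap (Sig o) (T_in n) A y = w.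
Proof. exact (colim_End_surj _ _ _ _ (sa_cocont (Sig o) _ _ _ _ T_is_colim) A w). Qed.

Definition subst_approx_step n (sub : NatTrans (comp_W (approx n) T) T) :
  NatTrans (comp_W (approx (S n)) T) T.
Proof.
  refine (@MkNT (comp_W (approx (S n)) T) T
    (fun A (x : (T A + {o : O & Sig o (approx n) (T A)})%type) =>
       match x with
       | inl t => t
       | inr (existT _ o y) =>
           T_op o A (Hmap (Sig o) sub A (theta (Sig o) (approx n) T_pt A y)) end) _).
  intros A B h [t|[o y]]; [reflexivity|].
  change (T_op o B (Hmap (Sig o) sub B (theta (Sig o) (approx n) T_pt B
            (fmap (comp_W (Sig o (approx n)) T_pt) h y)))
    = fmap T h (T_op o A (Hmap (Sig o) sub A (theta (Sig o) (approx n) T_pt A y)))).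
  rewrite (nt_nat (theta (Sig o) (approx n) T_pt) h y), (nt_nat (Hmap (Sig o) sub) h).
  apply (nt_nat (T_op o) h).
Defined.

Fixpoint subst_approx n : NatTrans (comp_W (approx n) T) T :=
  match n return NatTrans (comp_W (approx n) T) T with
  | 0 => @MkNT (comp_W (approx 0) T) T (fun A (x : Empty_set) => match x with end)
            (fun A B h (x : Empty_set) => match x with end)
  | S n => subst_approx_step n (subst_approx n) end.

Lemma subst_approx_compat n :
  forall A x, subst_approx (S n) A (approx_incl n (T A) x) = subst_approx n A x.
Proof.
  induction n as [|n IHn]; intros A x; [destruct x|].
  destruct x as [t|[o y]]; [reflexivity|].
  change (T_op o A (Hmap (Sig o) (subst_approx (S n)) A
            (theta (Sig o) (approx (S n)) T_pt A (Hmap (Sig o) (approx_incl n) (T_pt A) y)))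
          = T_op o A (Hmap (Sig o) (subst_approx n) A (theta (Sig o) (approx n) T_pt A y))).
  rewrite (theta_nat_X (Sig o) (approx n) (approx (S n)) (approx_incl n) T_pt A y).
  f_equal; apply Hmap_comp_ext; apply IHn.
Qed.

Definition T_mu_fun A : T (T A) -> T A :=
  chain_lift _ _ (fun n (x : approx n (T A)) => subst_approx n A x).

Lemma T_mu_fun_in A n x : T_mu_fun A (T_in n (T A) x) = subst_approx n A x.
Proof. apply chain_lift_in; intros; apply subst_approx_compat. Qed.

Definition T_mu : NatTrans (comp_W T T) T.
Proof.
  refine (@MkNT (comp_W T T) T T_mu_fun _).
  intros A B h y; destruct (T_in_surj _ y) as (n & x & <-).
  change (T_mu_fun B (fmap T (fmap T h) (T_in n (T A) x))
          = fmap T h (T_mu_fun A (T_in n (T A) x))).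
  rewrite fmap_T_in, !T_mu_fun_in; apply (nt_nat (subst_approx n)).
Defined.

Lemma T_mu_in A n x : T_mu A (T_in n (T A) x) = subst_approx n A x.
Proof. apply T_mu_fun_in. Qed.

Lemma T_mu_eta_l A (t : T A) : T_mu A (T_eta (T A) t) = t.
Proof. exact (T_mu_in A 1 (inl t)). Qed.

Lemma subst_approx_eta n :
  forall A x, subst_approx n A (fmap (approx n) (T_eta A) x) = T_in n A x.
Proof.
  induction n as [|n IHn]; intros A x; [destruct x|].
  destruct x as [a|[o y]].
  - symmetry; apply T_in_var.
  - change (T_op o A (Hmap (Sig o) (subst_approx n) A
              (theta (Sig o) (approx n) T_pt A (fmap (Sig o (approx n)) (T_eta A) y)))
            = T_in (S n) A (inr (existT _ o y))).
    rewrite (theta_nat_Z (Sig o) (approx n) I_pt T_pt T_eta (fun _ _ => eq_refl)).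
    rewrite (@Hmap_square (Sig o) (comp_W (approx n) I_W) _ (approx n) T
               _ (subst_approx n) (rho_nt (approx n)) (T_in n))
      by (intros; apply IHn).
    now rewrite theta_id, T_op_in_beta.
Qed.

Lemma T_mu_eta_r A (t : T A) : T_mu A (fmap T (T_eta A) t) = t.
Proof.
  destruct (T_in_surj _ t) as (n & x & <-).
  rewrite fmap_T_in, T_mu_in; apply subst_approx_eta.
Qed.

Lemma T_mu_op o A (w : Sig o T (T A)) :
  T_mu A (T_op o (T A) w) = T_op o A (Hmap (Sig o) T_mu A (theta (Sig o) T T_pt A w)).
Proof.
  destruct (Hmap_T_in_surj o (T A) w) as (n & y & <-).
  rewrite T_op_in_beta, T_mu_in.
  change (T_op o A (Hmap (Sig o) (subst_approx n) A (theta (Sig o) (approx n) T_pt A y))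
    = T_op o A (Hmap (Sig o) T_mu A
        (theta (Sig o) T T_pt A (Hmap (Sig o) (T_in n) (T_pt A) y)))).
  rewrite (theta_nat_X (Sig o) (approx n) T (T_in n) T_pt A y).
  f_equal; symmetry; apply Hmap_comp_ext; intros; apply T_mu_in.
Qed.

Lemma subst_approx_mu n :
  forall A z, T_mu A (subst_approx n (T A) z)
              = subst_approx n A (fmap (approx n) (T_mu A) z).
Proof.
  induction n as [|n IHn]; intros A x; [destruct x|].
  destruct x as [t|[o y]]; [reflexivity|].
  change (T_mu A (T_op o (T A) (Hmap (Sig o) (subst_approx n) (T A)
                     (theta (Sig o) (approx n) T_pt (T A) y)))
     = T_op o A (Hmap (Sig o) (subst_approx n) A
          (theta (Sig o) (approx n) T_pt A (fmap (Sig o (approx n)) (T_mu A) y)))).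
  assert (T_mu_pt : is_pt_mor (Z := comp_pt T_pt T_pt) (Z' := T_pt) T_mu)
    by (intros B x; apply T_mu_eta_l).
  rewrite T_mu_op, (theta_nat_Z (Sig o) (approx n) (comp_pt T_pt T_pt) T_pt T_mu T_mu_pt).
  change (theta (Sig o) (approx n) T_pt (T A) y)
    with (theta (Sig o) (approx n) T_pt (T_pt A) y).
  rewrite (theta_nat_X (Sig o) (comp_W (approx n) T_pt) T (subst_approx n) T_pt A).
  rewrite <- (theta_comp (Sig o) (approx n) T_pt T_pt A y).
  f_equal; rewrite <- !Hmap_comp; apply Hmap_ext; intros; apply IHn.
Qed.

Lemma T_mu_assoc A (x : T (T (T A))) :
  T_mu A (T_mu (T A) x) = T_mu A (fmap T (T_mu A) x).
Proof.
  destruct (T_in_surj _ x) as (n & z & <-).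
  rewrite fmap_T_in, !T_mu_in; apply subst_approx_mu.
Qed.

Definition T_monad : Monad := MkMonad T T_eta T_mu T_mu_assoc T_mu_eta_l T_mu_eta_r.

Definition T_rep : Rep Sig T_monad.
Proof.
  refine (MkRep O Sig T_monad T_op _).
  intros o A x; symmetry; apply T_mu_op.
Defined.

Section Initiality.
Variables (M : Monad) (s : Rep Sig M).

Definition fold_approx_step n (a : NatTrans (approx n) M) : NatTrans (approx (S n)) M.
Proof.
  refine (@MkNT (approx (S n)) M
    (fun A (x : (A + {o : O & Sig o (approx n) A})%type) =>
       match x with
       | inl b => m_eta M A b
       | inr (existT _ o y) => rep s o A (Hmap (Sig o) a A y) end) _).
  intros A B h [b|[o y]].
  - exact (nt_nat (m_eta M) h b).
  - change (rep s o B (Hmap (Sig o) a B (fmap (Sig o (approx n)) h y))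
            = fmap M h (rep s o A (Hmap (Sig o) a A y))).
    rewrite (nt_nat (Hmap (Sig o) a) h); apply (nt_nat (rep s o) h).
Defined.

Fixpoint fold_approx n : NatTrans (approx n) M :=
  match n return NatTrans (approx n) M with
  | 0 => zero_nt M
  | S n => fold_approx_step n (fold_approx n) end.

Lemma fold_approx_compat n :
  forall A x, fold_approx (S n) A (approx_incl n A x) = fold_approx n A x.
Proof.
  induction n as [|n IHn]; intros A x; [destruct x|].
  destruct x as [b|[o y]]; [reflexivity|].
  change (rep s o A (Hmap (Sig o) (fold_approx (S n)) A (Hmap (Sig o) (approx_incl n) A y))
          = rep s o A (Hmap (Sig o) (fold_approx n) A y)).
  f_equal; apply Hmap_comp_ext, IHn.
Qed.

Definition fold_T : NatTrans T M := colim_End_lift T_is_colim fold_approx fold_approx_compat.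

Lemma fold_T_in n A x : fold_T A (T_in n A x) = fold_approx n A x.
Proof. apply colim_End_lift_in. Qed.

Lemma fold_T_eta A x : fold_T A (T_eta A x) = m_eta M A x.
Proof. exact (fold_T_in 1 A (inl x)). Qed.

Lemma fold_T_op o A (w : Sig o T A) :
  fold_T A (T_op o A w) = rep s o A (Hmap (Sig o) fold_T A w).
Proof.
  destruct (Hmap_T_in_surj o A w) as (n & y & <-).
  rewrite T_op_in_beta, fold_T_in, Hmap_comp_ext with (c := fold_approx n);
    [reflexivity|apply fold_T_in].
Qed.

Lemma fold_subst_approx n :
  forall A x, fold_T A (subst_approx n A x)
              = m_mu M A (fmap M (fold_T A) (fold_approx n (T A) x)).
Proof.
  induction n as [|n IHn]; intros A x; [destruct x|].
  destruct x as [t|[o y]].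
  - change (fold_T A t = m_mu M A (fmap M (fold_T A) (m_eta M (T A) t))).
    rewrite <- (nt_nat (m_eta M) (fold_T A) t); symmetry; apply mu_eta_l.
  - change (fold_T A (T_op o A (Hmap (Sig o) (subst_approx n) A
                                   (theta (Sig o) (approx n) T_pt A y)))
      = m_mu M A (fmap M (fold_T A) (rep s o (T A) (Hmap (Sig o) (fold_approx n) (T A) y)))).
    assert (fold_T_pt : is_pt_mor (Z := T_pt) (Z' := pt_of_monad M) fold_T)
      by (intros B z; apply fold_T_eta).
    rewrite fold_T_op, <- (nt_nat (rep s o) (fold_T A)), <- (rep_mod s o A).
    change (tilde_act (Sig o) M A ?w)
      with (Hmap (Sig o) (m_mu M) A (theta (Sig o) M (pt_of_monad M) A w)).
    rewrite (theta_nat_Z (Sig o) M T_pt (pt_of_monad M) fold_T fold_T_pt).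
    change (Hmap (Sig o) (fold_approx n) (T A) y)
      with (Hmap (Sig o) (fold_approx n) (T_pt A) y).
    rewrite (theta_nat_X (Sig o) (approx n) M (fold_approx n) T_pt A y).
    f_equal; rewrite <- !Hmap_comp; apply Hmap_ext; intros; apply IHn.
Qed.

Definition fold_monad_mor : MonadMor T_monad M.
Proof.
  refine (MkMM T_monad M fold_T fold_T_eta _).
  intros A z; destruct (T_in_surj _ z) as (n & x & <-).
  change (fold_T A (T_mu A (T_in n (T A) x))
          = m_mu M A (fmap M (fold_T A) (fold_T (T A) (T_in n (T A) x)))).
  rewrite T_mu_in, fold_T_in; apply fold_subst_approx.
Defined.

Lemma fold_is_rep_mor : is_rep_mor T_rep s fold_monad_mor.
Proof. intros o A x; apply fold_T_op. Qed.

Lemma rep_mor_from_T_unique (m : MonadMor T_monad M) :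
  is_rep_mor T_rep s m -> forall A x, m A x = fold_T A x.
Proof.
  intros Hm.
  assert (on_approx : forall n A x, m A (T_in n A x) = fold_approx n A x).
  { induction n as [|n IHn]; intros A x; [destruct x|].
    destruct x as [b|[o y]].
    - rewrite T_in_var; exact (mm_eta _ _ m A b).
    - rewrite <- T_op_in_beta.
      change (m A (rep T_rep o A (Hmap (Sig o) (T_in n) A y))
              = rep s o A (Hmap (Sig o) (fold_approx n) A y)).
      rewrite Hm; f_equal; apply Hmap_comp_ext, IHn. }
  intros A x; destruct (T_in_surj _ x) as (n & z & <-).
  now rewrite on_approx, fold_T_in.
Qed.

End Initiality.

Lemma T_rep_initial : representable Sig.
Proof.
  exists T_monad, T_rep; intros M s.
  exists (fold_monad_mor M s); split.
  - apply fold_is_rep_mor.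
  - apply rep_mor_from_T_unique.
Qed.

End InitialRepresentation.

Theorem theorem4 : forall (O : Type) (Sig : O -> StrArity), representable Sig.
Proof. exact T_rep_initial. Qed.
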